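(* There is an Abelian torsion group $G$ with a proper invariant metric $d_G$ such that $\operatorname{l\text{-}asdim}(G,d_G)=0$ and $\operatorname{asdim}_{AN}(G,d_G)=\infty$.
   Context: For a metric space $X$: $\operatorname{asdim}_{AN}(X)\le n$ iff there are $b,c\ge0$ such that for every $r>0$ there are families $\mathcal U_1,\dots,\mathcal U_{n+1}$ of subsets covering $X$, each $r$-disjoint (points in different members of the same family at distance $\ge r$), with members of diameter $\le cr+b$; $\operatorname{asdim}_{AN}(X)=\infty$ if no such $n$ exists. $\operatorname{l\text{-}asdim}(X)\le n$ iff there are $c>0$ and an unbounded set $U\subset\mathbb R_+$ such that for every $r\in U$ there are families $\mathcal U_1,\dots,\mathcal U_{n+1}$ covering $X$, each $r$-disjoint, with members of diameter $\le cr$. A metric on a group is invariant if $d(g+x,g+y)=d(x,y)$; proper means bounded sets are finite. *)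

From mathcomp Require Import all_boot all_algebra.
From Stdlib Require Import Reals.

Set Implicit Arguments.
Unset Strict Implicit.
Unset Printing Implicit Defensive.

Local Open Scope R_scope.

Definition is_metric (T : Type) (d : T -> T -> R) : Prop :=
  (forall x y, 0 <= d x y) /\
  (forall x y, d x y = 0 <-> x = y) /\
  (forall x y, d x y = d y x) /\
  (forall x y z, d x z <= d x y + d y z).

Definition invariant_metric (G : zmodType) (d : G -> G -> R) : Prop :=
  forall g x y, d (GRing.add g x) (GRing.add g y) = d x y.

Definition proper_metric (T : eqType) (d : T -> T -> R) : Prop :=
  forall (B : T -> Prop), (exists x0 r, forall y, B y -> d x0 y <= r) ->
    exists s : seq T, forall y, B y -> y \in s.

Definition torsion_group (G : zmodType) : Prop :=
  forall x : G, exists n : nat, (0 < n)%nat /\ GRing.natmul x n = (@GRing.zero G).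

Definition family (T : Type) := (T -> Prop) -> Prop.

Definition r_disjoint (T : Type) (d : T -> T -> R) (r : R) (F : family T) : Prop :=
  forall U V, F U -> F V -> U <> V -> forall x y, U x -> V y -> r <= d x y.

Definition diam_bounded (T : Type) (d : T -> T -> R) (D : R) (F : family T) : Prop :=
  forall U, F U -> forall x y, U x -> U y -> d x y <= D.

Definition good_cover (T : Type) (d : T -> T -> R) (n : nat) (r D : R)
    (Fs : nat -> family T) : Prop :=
  (forall x, exists i, (i <= n)%nat /\ exists U, Fs i U /\ U x) /\
  (forall i, (i <= n)%nat -> r_disjoint d r (Fs i)) /\
  (forall i, (i <= n)%nat -> diam_bounded d D (Fs i)).

Definition asdimAN_le (T : Type) (d : T -> T -> R) (n : nat) : Prop :=
  exists b c, 0 <= b /\ 0 <= c /\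
    forall r, 0 < r -> exists Fs : nat -> family T, good_cover d n r (c * r + b) Fs.

Definition asdimAN_infinite (T : Type) (d : T -> T -> R) : Prop :=
  forall n : nat, ~ asdimAN_le d n.

Definition lasdim_le (T : Type) (d : T -> T -> R) (n : nat) : Prop :=
  exists c, 0 < c /\ exists U : R -> Prop,
    (forall r, U r -> 0 <= r) /\ (forall M, exists r, U r /\ M < r) /\
    forall r, U r -> exists Fs : nat -> family T, good_cover d n r (c * r) Fs.

From Pilot Require Import Defs.
From mathcomp Require Import all_boot all_algebra.
From Stdlib Require Import Reals Lra.
From mathcomp Require Import all_boot all_algebra zify ring boolp.

Set Implicit Arguments.
Unset Strict Implicit.
Unset Printing Implicit Defensive.
Import GRing.Theory.
Delimit Scope R_scope with Re.

(* The group is F_2[x], a direct sum of countably many copies of Z/2. Its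
   coefficients are cut into consecutive blocks of lengths 1, 2, 4, ...; block
   b gets the weight lambda_k = 2^(2^(k+1)), k = log2 b, and the norm of p is
   the largest weighted number of nonzero coefficients of p in one block.
   Since lambda_(k+1) = lambda_k^2, the polynomials supported on the blocks of
   level at most k have norm at most lambda_(k+1), and all the others have
   norm at least lambda_(k+1). At the scales lambda_(k+1) the cosets of these
   finite subgroups thus form a single lambda_(k+1)-disjoint cover by sets of
   diameter lambda_(k+1): l-asdim is 0, and bounded sets are finite.

   Writing t_j ones at the start of block 2^k + j embeds the grid {0..Q}^m
   into level k, so that adjacent grid points are at distance at most lambda_k
   while a difference d in one coordinate costs at least d lambda_k. Hence
   n+1 families that are (lambda_k + 1)-disjoint, with diameters below
   (K+1) lambda_k, cover the box [0,Q)^m by n+1 sets, each split into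
   adjacency-closed classes of width at most K in every coordinate.
   Thickening such a set S by {0,1}, one coordinate at a time, multiplies its
   size by at least (K+2)/(K+1), because every run in the thickened direction
   has length at most K+1; so |S| (K+2)^m <= (Q+1)^m (K+1)^m. For Q = K+2 and
   m = (n+1)(K+1)(K+3) this contradicts Bernoulli's inequality. *)

Lemma card_bigcup_le (T : finType) n (F : 'I_n -> {set T}) :
  #|\bigcup_(i < n) F i| <= \sum_(i < n) #|F i|.
Proof.
elim: n F => [|n IH] F; first by rewrite big_ord0 cards0.
rewrite big_ord_recr [X in _ <= X]big_ord_recr /=.
exact: leq_trans (leq_card_setU _ _) (leq_add (IH _) (leqnn _)).
Qed.

(** * Clustered subsets of a grid *)

Section Cube.
Variables m Q : nat.
Local Notation cube := {ffun 'I_m -> 'I_Q.+1}.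

(* Only meaningful while [x l + k <= Q]: [inord] sends larger values to 0. *)
Definition shift_at (l k : nat) (x : cube) : cube :=
  [ffun j => if val j == l then inord (x j + k) else x j].

Definition adjacent (s t : cube) := forall j, s j <= (t j).+1 /\ t j <= (s j).+1.

Lemma shift_at_same (l : 'I_m) k (x : cube) : x l + k <= Q -> shift_at l k x l = x l + k :> nat.
Proof. by move=> h; rewrite ffunE eqxx inordK. Qed.

Lemma shift_at_other l k (x : cube) (j : 'I_m) : val j != l -> shift_at l k x j = x j.
Proof. by rewrite ffunE => /negbTE ->. Qed.

Lemma shift_at0 l (x : cube) : shift_at l 0 x = x.
Proof. by apply/ffunP => j; rewrite ffunE addn0 inord_val if_same. Qed.

Lemma shift_atS (l : 'I_m) k (x : cube) :
  x l + k < Q -> shift_at l 1 (shift_at l k x) = shift_at l k.+1 x.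
Proof.
move=> h; apply/ffunP => j; rewrite !ffunE; case: eqP => // /val_inj ->.
by rewrite inordK ?addn1 ?addnS //; lia.
Qed.

Lemma shift_at_inj (l : 'I_m) k (x y : cube) : x l + k <= Q -> y l + k <= Q ->
  shift_at l k x = shift_at l k y -> x = y.
Proof.
move=> hx hy /ffunP e; apply/ffunP => j; have := e j.
case: (eqVneq j l) => [->|ne].
  by move/(congr1 (@nat_of_ord _)); rewrite !shift_at_same // => /addIn /val_inj.
by rewrite !shift_at_other.
Qed.

Section Exits.
Variables (l : 'I_m) (K : nat) (A : {set cube}).
Hypothesis A_exit : forall x, x \in A -> exists k, [/\ k <= K, x l + k < Q,
  shift_at l k x \in A & shift_at l k.+1 x \notin A].

Definition exits := [set y in A | shift_at l 1 y \notin A].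

Lemma exits_lt (y : cube) : y \in exits -> y l < Q.
Proof.
rewrite inE => /andP [/A_exit [k [_ hk _ _]] _].
exact: leq_ltn_trans (leq_addr _ _) hk.
Qed.

Lemma card_le_exits : #|A| <= #|exits| * K.+1.
Proof.
pose F (k : 'I_K.+1) := [set x in A | (x l + k < Q) && (shift_at l k x \in exits)].
have cardF k : #|F k| <= #|exits|.
  have inj : {in F k &, injective (shift_at l k)}.
    move=> x y; rewrite !inE => /and3P [_ hx _] /and3P [_ hy _].
    by apply: shift_at_inj; apply: ltnW.
  rewrite -(card_in_imset inj); apply/subset_leq_card/subsetP => _ /imsetP [x + ->].
  by rewrite inE => /and3P [].
have sub : A \subset \bigcup_(k < K.+1) F k.
  apply/subsetP => x xA; have [k [hk hxk inA outA]] := A_exit xA.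
  apply/bigcupP; exists (Ordinal (hk : k < K.+1)) => //.
  by rewrite !inE xA hxk inA shift_atS.
apply: leq_trans (subset_leq_card sub) (leq_trans (card_bigcup_le _) _).
by rewrite mulnC -[X in _ <= X * _]card_ord -sum_nat_const leq_sum.
Qed.

Lemma card_exits_shift : #|A| + #|exits| <= #|A :|: [set shift_at l 1 x | x in A]|.
Proof.
have inj : {in exits &, injective (shift_at l 1)}.
  by move=> x y /exits_lt hx /exits_lt hy; apply: shift_at_inj; rewrite addn1.
rewrite -(card_in_imset inj) -cardsUI.
have -> : A :&: shift_at l 1 @: exits = set0.
  apply/setP => z; rewrite !inE; apply/negbTE/negP => /andP [zA /imsetP [y yE ez]].
  by move: yE; rewrite inE -ez zA andbF.
rewrite cards0 addn0; apply/subset_leq_card/setUS/imsetS/subsetP => y.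
by rewrite inE => /andP [].
Qed.

Lemma card_shift_union : #|A| * K.+2 <= #|A :|: [set shift_at l 1 x | x in A]| * K.+1.
Proof. have := card_le_exits; have := card_exits_shift; nia. Qed.

End Exits.

(* [thicken l] below is the sum of [S] and [{0,1}^l] on the first [l]
   coordinates; [lifted l s x] says how [x] arises from [s \in S]. *)
Definition lifted (l : nat) (s x : cube) :=
  forall j : 'I_m, if j < l then is_true (s j <= x j <= (s j).+1) else x j = s j :> nat.

Lemma lifted_adjacent l (s s' x x' : cube) : lifted l s x -> lifted l s' x' ->
  (forall j : 'I_m, j < l -> x j = x' j) -> adjacent x x' -> adjacent s s'.
Proof.
move=> ls ls' eq_below adj j; have := ls j; have := ls' j; have := adj j.
case: ifP => [/eq_below ->|_]; lia.
Qed.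

Section Thicken.
Variables (K : nat) (S : {set cube}) (P : cube -> cube -> Prop).
Hypothesis S_box : forall s, s \in S -> forall j, s j < Q.
Hypothesis P_adjacent : forall s s', s \in S -> s' \in S -> adjacent s s' -> P s s'.
Hypothesis P_trans : forall a b c, P a b -> P b c -> P a c.
Hypothesis P_bounded : forall s s', P s s' -> forall j, s' j <= s j + K.

Fixpoint thicken (l : nat) : {set cube} :=
  if l is l'.+1 then thicken l' :|: [set shift_at l' 1 x | x in thicken l'] else S.

Lemma thicken_lifted l (x : cube) : x \in thicken l -> exists2 s, s \in S & lifted l s x.
Proof.
elim: l x => [|l IH] x /=; first by exists x => // j; rewrite ltn0.
rewrite inE => /orP [/IH [s sS ls]|/imsetP [y /IH [s sS ls] ->]]; exists s => // j.
  have := ls j; rewrite ltnS [j <= l]leq_eqVlt; case: (eqVneq (val j) l) => [<-|_] //=.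
  by rewrite ltnn => ->; lia.
have := ls j; have := S_box sS j; rewrite ltnS [j <= l]leq_eqVlt.
case: (eqVneq (val j) l) => [<-|ne] /=; last by rewrite shift_at_other.
by rewrite ltnn => hs ys; rewrite shift_at_same; lia.
Qed.

Lemma thicken_lt (l : 'I_m) (y : cube) : y \in thicken l -> y l < Q.
Proof. by move=> /thicken_lifted [s sS /(_ l)]; rewrite ltnn => ->; apply: S_box. Qed.

Lemma thicken_shift_lt (l : 'I_m) i (x : cube) : x l + i <= Q ->
  shift_at l i x \in thicken l -> x l + i < Q.
Proof. by move=> h /thicken_lt; rewrite shift_at_same. Qed.

(* The points of a run in direction [l] come from pairwise adjacent points of
   [S], so a run of length [K+2] would relate two points of [S] whose [l]-th
   coordinates differ by [K+1]. *)
Lemma thicken_no_long_run (l : 'I_m) (x : cube) : x \in thicken l ->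
  ~ (forall i, i <= K.+1 -> shift_at l i x \in thicken l).
Proof.
move=> xT run.
have run_lt i : i <= K.+1 -> x l + i < Q.
  elim: i => [|i IH] hi; first by rewrite addn0 (thicken_lt xT).
  by apply: thicken_shift_lt (run _ hi); rewrite addnS IH // ltnW.
have [s0 s0S ls0] := thicken_lifted xT.
have chain i : i <= K.+1 ->
    exists2 s, s \in S & lifted l s (shift_at l i x) /\ P s0 s.
  elim: i => [|i IH] hi.
    by exists s0; rewrite ?shift_at0 //; split => //; apply: P_adjacent => // j; lia.
  have [s sS [ls Ps]] := IH (ltnW hi).
  have [s' s'S ls'] := thicken_lifted (run _ hi); exists s' => //; split => //.
  apply: P_trans Ps (P_adjacent sS s'S (lifted_adjacent ls ls' _ _)).
    by move=> j /ltn_eqF /negbT ne; rewrite !shift_at_other.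
  move=> j; case: (eqVneq j l) => [->|ne]; last by rewrite !shift_at_other //; lia.
  have hi1 := run_lt _ hi; have hi0 := run_lt _ (ltnW hi).
  by rewrite !shift_at_same; lia.
have [s _ [ls /P_bounded /(_ l)]] := chain _ (leqnn _).
have := ls l; have := ls0 l; rewrite ltnn shift_at_same; [lia|exact/ltnW/run_lt].
Qed.

Lemma thicken_exit (l : 'I_m) (x : cube) : x \in thicken l -> exists k, [/\ k <= K, x l + k < Q,
  shift_at l k x \in thicken l & shift_at l k.+1 x \notin thicken l].
Proof.
move=> xT; apply: contrapT => no_exit; apply: (thicken_no_long_run xT).
have inv i : i <= K.+1 -> shift_at l i x \in thicken l /\ x l + i < Q.
  elim: i => [|i IH] hi; first by rewrite shift_at0 addn0 xT (thicken_lt xT).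
  have [xiT xi_lt] := IH (ltnW hi).
  have xi1T : shift_at l i.+1 x \in thicken l.
    by apply/negPn/negP => xi1N; apply: no_exit; exists i.
  by split => //; apply: thicken_shift_lt xi1T; rewrite addnS.
by move=> i /inv [].
Qed.

Lemma card_thicken l : l <= m -> #|S| * K.+2 ^ l <= #|thicken l| * K.+1 ^ l.
Proof.
elim: l => [|l IH] hl; first by rewrite !expn0 !muln1.
have step := card_shift_union (@thicken_exit (Ordinal hl)).
rewrite !expnS mulnCA (leq_trans (leq_mul (leqnn _) (IH (ltnW hl)))) //.
by rewrite mulnCA !mulnA leq_mul2r step orbT.
Qed.

Theorem card_clustered_le : #|S| * K.+2 ^ m <= Q.+1 ^ m * K.+1 ^ m.
Proof.
apply: leq_trans (card_thicken (leqnn m)) (leq_mul _ (leqnn _)).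
suff -> : Q.+1 ^ m = #|{ffun 'I_m -> 'I_Q.+1}| by apply: max_card.
by rewrite card_ffun !card_ord.
Qed.

End Thicken.

Definition clustered (K : nat) (S : {set cube}) (P : cube -> cube -> Prop) :=
  [/\ forall s, s \in S -> forall j, s j < Q,
      forall s s', s \in S -> s' \in S -> adjacent s s' -> P s s',
      forall a b c, P a b -> P b c -> P a c &
      forall s s', P s s' -> forall j, s' j <= s j + K].

Definition box := [set t : cube | [forall j, t j < Q]].

Lemma card_box : Q ^ m <= #|box|.
Proof.
pose widen (f : {ffun 'I_m -> 'I_Q}) : cube := [ffun j => widen_ord (leqnSn Q) (f j)].
have widen_inj : injective widen.
  move=> f1 f2 /ffunP e; apply/ffunP => j; apply/val_inj.
  by have := congr1 val (e j); rewrite !ffunE.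
rewrite -[Q in Q ^ m]card_ord -[m in _ ^ m]card_ord -card_ffun -(card_imset _ widen_inj).
apply/subset_leq_card/subsetP => _ /imsetP [f _ ->].
by rewrite /box inE; apply/forallP => j; rewrite ffunE /=.
Qed.

Lemma card_clustered_cover_le n K (S : nat -> {set cube}) (P : nat -> cube -> cube -> Prop) :
  box \subset \bigcup_(i < n.+1) S i -> (forall i, i <= n -> clustered K (S i) (P i)) ->
  Q ^ m * K.+2 ^ m <= n.+1 * (Q.+1 ^ m * K.+1 ^ m).
Proof.
move=> cover clS.
apply: leq_trans (leq_mul (leq_trans card_box (subset_leq_card cover)) (leqnn _)) _.
apply: leq_trans (leq_mul (card_bigcup_le _) (leqnn _)) _.
rewrite big_distrl -[X in X * _](card_ord n.+1) -sum_nat_const leq_sum // => i _.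
by have [h1 h2 h3 h4] := clS i (ltn_ord i); apply: (card_clustered_le h1 h2 h3 h4).
Qed.

End Cube.

Lemma bernoulli_expn a m : a ^ m * (a + m) <= a * a.+1 ^ m.
Proof.
elim: m => [|m IH]; first by rewrite !expn0 mul1n addn0 muln1.
have le_pow : a ^ m <= a.+1 ^ m by case: m {IH} => // m; rewrite leq_exp2r.
rewrite !expnS addnS -addSn mulnDr -mulnA mulnC !mulnA; nia.
Qed.

Lemma expn_succ_gt n a : 0 < a -> n.+1 * a ^ (n.+1 * a) < a.+1 ^ (n.+1 * a).
Proof.
move=> a_gt0; have := bernoulli_expn a (n.+1 * a); have := expn_gt0 a (n.+1 * a).
rewrite a_gt0; nia.
Qed.

(* For [Q = K + 2] the bound reads [(a+1)^m <= (n+1) a^m] with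
   [a = (K+1)(K+3)], which fails at [m = (n+1) a]. *)
Theorem no_clustered_cover n K (S : nat -> {set {ffun 'I_(n.+1 * (K.+1 * K.+3)) -> 'I_K.+3}})
  (P : nat -> _ -> _ -> Prop) :
  box _ K.+2 \subset \bigcup_(i < n.+1) S i -> ~ (forall i, i <= n -> clustered K (S i) (P i)).
Proof.
move=> cover /(card_clustered_cover_le cover).
have sq : K.+2 * K.+2 = (K.+1 * K.+3).+1 by ring.
by rewrite -!expnMn sq (mulnC K.+3) leqNgt expn_succ_gt.
Qed.

(** * A block norm on F_2[x] *)

Definition F2poly := {poly 'Z_2}.

Definition tower k := 2 ^ 2 ^ k.+1.

(* Block [b] has [2^b] coefficients; the blocks of level at most [k], i.e.
   [b < 2^(k+1)], are exactly the indices below [tower k - 1]. *)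
Definition in_block b i := 2 ^ b - 1 <= i < 2 ^ b.+1 - 1.

Definition block_count (p : F2poly) b := \sum_(2 ^ b - 1 <= i < 2 ^ b.+1 - 1) ((p`_i != 0)%R).

Definition block_weight b := tower (trunc_log 2 b).

Definition bnorm (p : F2poly) := \max_(b < size p) block_weight b * block_count p b.

Lemma tower_gt0 k : 0 < tower k.
Proof. by rewrite expn_gt0. Qed.

Lemma leq_tower k k' : k <= k' -> tower k <= tower k'.
Proof. by move=> le_kk'; rewrite !leq_exp2l. Qed.

Lemma towerS k : tower k * tower k = tower k.+1.
Proof. by rewrite -expnD addnn -mul2n -expnS. Qed.

Lemma ltn_tower k : k < tower k.
Proof.
have := ltn_expl k.+1 (isT : 1 < 2); have := ltn_expl (2 ^ k.+1) (isT : 1 < 2).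
rewrite /tower; lia.
Qed.

Lemma trunc_log2_le b k : b < 2 ^ k.+1 -> trunc_log 2 b <= k.
Proof.
case: b => [|b] hb; first by rewrite trunc_log0.
by rewrite -ltnS -(ltn_exp2l _ _ (isT : 1 < 2)) (leq_ltn_trans (trunc_logP _ _)).
Qed.

Lemma in_blockE b i : in_block b i = (trunc_log 2 i.+1 == b).
Proof.
have pos := expn_gt0 2 b; rewrite /in_block expnS.
apply/idP/eqP => [h|<-]; first by apply: trunc_log_eq => //; rewrite expnS; lia.
by have := trunc_log_bounds (isT : 1 < 2) (ltn0Sn i); rewrite /= expnS; lia.
Qed.

Lemma in_block_uniq b b' i : in_block b i -> in_block b' i -> b = b'.
Proof. by rewrite !in_blockE => /eqP <- /eqP. Qed.

Lemma in_block_log i : in_block (trunc_log 2 i.+1) i.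
Proof. by rewrite in_blockE. Qed.

Lemma block_count_le (p : F2poly) b : block_count p b <= 2 ^ b.
Proof.
apply: leq_trans (_ : \sum_(2 ^ b - 1 <= i < 2 ^ b.+1 - 1) 1 <= _).
  by apply: leq_sum => i _; case: (_ != _).
by rewrite sum_nat_const_nat muln1 expnS; have := expn_gt0 2 b; lia.
Qed.

Lemma block_count0 (p : F2poly) b : size p <= 2 ^ b - 1 -> block_count p b = 0.
Proof.
move=> h; rewrite /block_count big_nat big1 // => i /andP [hi _].
by rewrite nth_default ?eqxx //; apply: leq_trans hi.
Qed.

Lemma block_count_gt0 (p : F2poly) b i : in_block b i -> (p`_i != 0)%R -> 0 < block_count p b.
Proof.
move=> /andP [i_ge i_lt] nz; rewrite /block_count (big_cat_nat i_ge (ltnW i_lt)) /=.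
by rewrite [X in _ + X]big_ltn //= nz addnCA addSn.
Qed.

Lemma block_countD (p q : F2poly) b : block_count (p + q)%R b <= block_count p b + block_count q b.
Proof.
rewrite /block_count -big_split /=; apply: leq_sum => i _; rewrite coefD.
by case: (eqVneq p`_i 0)%R => [->|_]; [rewrite add0r leq_addl|case: (p`_i + q`_i != 0)%R].
Qed.

Lemma block_countN (p : F2poly) b : block_count (- p)%R b = block_count p b.
Proof. by apply: eq_bigr => i _; rewrite coefN oppr_eq0. Qed.

Lemma leq_bnorm (p : F2poly) b : block_weight b * block_count p b <= bnorm p.
Proof.
case: (ltnP b (size p)) => h.
  exact: (leq_bigmax (F := fun b : 'I_(size p) => block_weight b * block_count p b) (Ordinal h)).
rewrite block_count0 ?muln0 //; apply: leq_trans h _.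
by have := ltn_expl b (isT : 1 < 2); lia.
Qed.

Lemma bnorm_leP (p : F2poly) M : (forall b, block_weight b * block_count p b <= M) -> bnorm p <= M.
Proof. by move=> h; apply/bigmax_leqP => b _; apply: h. Qed.

Lemma bnorm0 : bnorm 0%R = 0.
Proof. by rewrite /bnorm size_poly0 big_ord0. Qed.

Lemma bnormD (p q : F2poly) : bnorm (p + q)%R <= bnorm p + bnorm q.
Proof.
apply: bnorm_leP => b; apply: leq_trans (leq_add (leq_bnorm p b) (leq_bnorm q b)).
by rewrite -mulnDr leq_mul2l block_countD orbT.
Qed.

Lemma bnormN (p : F2poly) : bnorm (- p)%R = bnorm p.
Proof. by rewrite /bnorm size_polyN; apply: eq_bigr => b _; rewrite block_countN. Qed.

Lemma bnorm_coef (p : F2poly) i : (p`_i != 0)%R -> block_weight (trunc_log 2 i.+1) <= bnorm p.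
Proof.
move=> nz; apply: leq_trans (leq_bnorm p (trunc_log 2 i.+1)).
by rewrite -[X in X <= _]muln1 leq_mul2l (block_count_gt0 (in_block_log i)) ?orbT.
Qed.

Lemma bnorm_eq0 (p : F2poly) : bnorm p = 0 -> p = 0%R.
Proof.
move=> p0; apply/eqP; apply: contraT => nz.
have lead_nz : (p`_(size p).-1 != 0)%R by rewrite -lead_coefE lead_coef_eq0.
by have := bnorm_coef lead_nz; rewrite p0 leqn0 /block_weight (gtn_eqF (tower_gt0 _)).
Qed.

Lemma bnorm_small (p : F2poly) k : size p < tower k -> bnorm p <= tower k.+1.
Proof.
move=> h; apply: bnorm_leP => b; case: (ltnP b (2 ^ k.+1)) => hb.
  rewrite -towerS leq_mul ?leq_tower ?trunc_log2_le //.
  by apply: leq_trans (block_count_le p b) _; rewrite leq_exp2l // ltnW.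
rewrite block_count0 ?muln0 //; have : tower k <= 2 ^ b by rewrite leq_exp2l.
by rewrite /tower in h *; lia.
Qed.

Lemma bnorm_large (p : F2poly) k : tower k <= size p -> tower k.+1 <= bnorm p.
Proof.
move=> h; set i := (size p).-1.
have nz : (p`_i != 0)%R.
  by rewrite -lead_coefE lead_coef_eq0 -size_poly_gt0; have := tower_gt0 k; lia.
apply: leq_trans (bnorm_coef nz); apply: leq_tower; apply: trunc_log_max => //.
have := in_block_log i; rewrite /in_block => /andP [_ hi].
rewrite -ltnS -(ltn_exp2l _ _ (isT : 1 < 2)).
by have := tower_gt0 k; move: h hi; rewrite /i /tower; lia.
Qed.

(** * Grid points as polynomials *)

Lemma sum_ltn_xor s L a a' : a <= L -> a' <= L ->
  \sum_(s <= i < s + L) ((i < s + a) != (i < s + a')) = (a - a') + (a' - a).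
Proof.
wlog le_aa' : a a' / a <= a'.
  move=> W ha ha'; case: (leqP a a') => h; first exact: W.
  rewrite [RHS]addnC -(W a' a (ltnW h) ha' ha).
  by apply: eq_bigr => i _; rewrite eq_sym.
move=> ha ha'; rewrite (_ : a - a' = 0) ?add0n; last lia.
have out1 : \sum_(s <= i < s + a) ((i < s + a) != (i < s + a')) = 0.
  by rewrite big_nat big1 // => i /andP [_ hi]; rewrite hi (leq_trans hi) ?leq_add2l.
have out2 : \sum_(s + a' <= i < s + L) ((i < s + a) != (i < s + a')) = 0.
  by rewrite big_nat big1 // => i /andP [hi _]; rewrite !ltnNge hi (leq_trans _ hi) ?leq_add2l.
have mid : \sum_(s + a <= i < s + a') ((i < s + a) != (i < s + a')) = a' - a.
  rewrite big_nat (eq_bigr (fun _ => 1)) => [|i /andP [h1 h2]]; last by rewrite ltnNge h1 h2.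
  by rewrite -big_nat sum_nat_const_nat muln1; lia.
rewrite (big_cat_nat (leq_addr a s)); try by rewrite leq_add2l.
rewrite (@big_cat_nat _ _ _ (s + a') (s + a)); try by rewrite leq_add2l.
by rewrite out1 mid out2 /= addn0.
Qed.

Lemma Z2_natr_sub_neq0 (a b : bool) : ((a%:R - b%:R : 'Z_2) != 0)%R = (a != b).
Proof. by case: a; case: b. Qed.

Section Code.
Variables k m Q : nat.
Local Notation cube := {ffun 'I_m -> 'I_Q.+1}.

(* Block [code_block j] of level [k] starts with [t j] ones. *)
Definition code_block (j : 'I_m) := 2 ^ k + j.

Definition code_start (j : 'I_m) := 2 ^ code_block j - 1.

Definition code_coef (t : cube) i := [exists j, code_start j <= i < code_start j + t j].

Definition code (t : cube) : F2poly := (\poly_(i < tower k) (code_coef t i)%:R)%R.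

Hypotheses (m_le : m <= 2 ^ k) (Q_le : Q <= 2 ^ 2 ^ k).

Lemma code_block_log j : trunc_log 2 (code_block j) = k.
Proof.
apply: trunc_log_eq => //; rewrite /code_block expnS.
by have := ltn_ord j; lia.
Qed.

Lemma code_block_inj : injective code_block.
Proof. by move=> j j' /addnI /val_inj. Qed.

Lemma code_entry_le (t : cube) j : t j <= 2 ^ code_block j.
Proof.
apply: leq_trans (leq_trans Q_le _); first by rewrite -ltnS.
by rewrite leq_exp2l // leq_addr.
Qed.

Lemma code_block_end j : 2 ^ (code_block j).+1 - 1 = code_start j + 2 ^ code_block j.
Proof. by rewrite /code_start expnS; have := expn_gt0 2 (code_block j); lia. Qed.

Lemma code_coef_block (t : cube) j i :
  code_start j <= i < code_start j + t j -> in_block (code_block j) i.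
Proof.
move=> /andP [l hi]; rewrite /in_block code_block_end l /=.
exact: leq_trans hi (leq_add (leqnn _) (code_entry_le t j)).
Qed.

Lemma code_coef_in_block (t : cube) j i : in_block (code_block j) i ->
  code_coef t i = (i < code_start j + t j).
Proof.
move=> ib; apply/existsP/idP => [[j' /[dup] /code_coef_block ib' /andP [_ hi]]|hi].
  by rewrite (code_block_inj (in_block_uniq ib ib')).
by exists j; case/andP: ib => -> _.
Qed.

Lemma code_coef_off (t : cube) b i : in_block b i -> (forall j, code_block j != b) ->
  code_coef t i = false.
Proof.
move=> ib off; apply/existsP => [[j /code_coef_block ibj]].
by have := off j; rewrite (in_block_uniq ibj ib) eqxx.
Qed.

Lemma coef_code (t : cube) i : ((code t)`_i = (code_coef t i)%:R :> 'Z_2)%R.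
Proof.
rewrite coef_poly; case: ltnP => // hi.
case: (boolP (code_coef t i)) => // /existsP [j /code_coef_block].
rewrite /in_block => /andP [_ hj].
have : 2 ^ (code_block j).+1 <= tower k.
  by rewrite leq_exp2l // /code_block expnS; have := ltn_ord j; lia.
by move: hi hj; lia.
Qed.

Lemma code_sub_coef_neq0 (t t' : cube) i :
  (((code t - code t')`_i != 0)%R) = (code_coef t i != code_coef t' i).
Proof. by rewrite coefB !coef_code Z2_natr_sub_neq0. Qed.

Lemma block_count_code_at (t t' : cube) j :
  block_count (code t - code t')%R (code_block j) = (t j - t' j) + (t' j - t j).
Proof.
have inb i : code_start j <= i < code_start j + 2 ^ code_block j -> in_block (code_block j) i.
  by rewrite /in_block code_block_end.
rewrite /block_count -/(code_start j) code_block_end.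
under eq_big_nat => i /inb ib do rewrite code_sub_coef_neq0 !(code_coef_in_block _ ib).
exact: sum_ltn_xor (code_entry_le t j) (code_entry_le t' j).
Qed.

Lemma block_count_code_off (t t' : cube) b : (forall j, code_block j != b) ->
  block_count (code t - code t')%R b = 0.
Proof.
move=> off; rewrite /block_count big_nat big1 // => i ib.
by rewrite code_sub_coef_neq0 !(code_coef_off _ ib off).
Qed.

Lemma bnorm_code_adjacent (t t' : cube) : adjacent t t' -> bnorm (code t - code t')%R <= tower k.
Proof.
move=> adj; apply: bnorm_leP => b.
case: (pickP (fun j => code_block j == b)) => [j /eqP <-|off]; last first.
  by rewrite block_count_code_off ?muln0 // => j; rewrite off.
rewrite block_count_code_at /block_weight code_block_log -[X in _ <= X]muln1 leq_mul2l.
by have := adj j; lia.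
Qed.

Lemma bnorm_code_ge (t t' : cube) j : tower k * (t' j - t j) <= bnorm (code t - code t')%R.
Proof.
apply: leq_trans (leq_bnorm _ (code_block j)).
by rewrite block_count_code_at /block_weight code_block_log leq_mul2l leq_addl orbT.
Qed.

End Code.

(** * The metric *)

Lemma INR_leq m n : m <= n -> (INR m <= INR n)%Re.
Proof. by move/leP; apply: le_INR. Qed.

Lemma INR_ltn m n : m < n -> (INR m < INR n)%Re.
Proof. by move/ltP; apply: lt_INR. Qed.

Lemma ltn_INR m n : (INR m < INR n)%Re -> m < n.
Proof. by move=> h; apply/ltP; apply: INR_lt. Qed.

Section NormMetric.
Local Open Scope ring_scope.
Variables (G : zmodType) (N : G -> nat).

Definition norm_dist (x y : G) : R := INR (N (x - y)).

Lemma norm_dist_invariant : invariant_metric norm_dist.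
Proof. by move=> g x y; rewrite /norm_dist opprD addrACA subrr add0r. Qed.

Hypotheses (N0 : N 0 = 0%N) (N_eq0 : forall x, N x = 0%N -> x = 0).
Hypotheses (N_opp : forall x, N (- x) = N x) (N_add : forall x y, (N (x + y) <= N x + N y)%N).

Lemma norm_dist_metric : is_metric norm_dist.
Proof.
split; first by move=> x y; apply: pos_INR.
split.
  move=> x y; split => [/(INR_eq _ 0) /N_eq0 /eqP|->]; first by rewrite subr_eq0 => /eqP.
  by rewrite /norm_dist subrr N0.
split; first by move=> x y; rewrite /norm_dist -opprB N_opp.
move=> x y z; rewrite /norm_dist -plus_INR; apply: INR_leq.
by rewrite (_ : x - z = (x - y) + (y - z)) ?N_add // addrA subrK.
Qed.

Lemma norm_dist_proper : (forall M, exists s : seq G, forall x, (N x <= M)%N -> x \in s) ->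
  proper_metric norm_dist.
Proof.
move=> fin B [x0 [r Br]]; have [M hM] := INR_unbounded r; have [s hs] := fin M.
exists [seq x0 - z | z <- s] => y /Br y_near; apply/mapP; exists (x0 - y).
  by apply/hs/ltnW/ltn_INR; rewrite /norm_dist in y_near; lra.
by rewrite opprB addrC subrK.
Qed.

Lemma coset_good_cover (H : G -> Prop) (r : nat) : H 0 -> (forall a b, H a -> H b -> H (a - b)) ->
  (forall x, H x -> (N x <= r)%N) -> (forall x, (N x < r)%N -> H x) ->
  good_cover norm_dist 0 (INR r) (INR r) (fun _ U => exists x, U = fun y => H (y - x)).
Proof.
move=> H0 HB small large.
have HD a b : H a -> H b -> H (a + b).
  by move=> Ha Hb; rewrite -[b]opprK -[- b]sub0r; apply/HB/HB.
split; [|split] => [x|_ _ U V [x1 ->] [x2 ->] neq y z y1 z2|_ _ U [x ->] y z yx zx].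
- by exists 0%N; split => //; exists (fun y => H (y - x)); split; [exists x|rewrite subrr].
- apply: Rnot_lt_le => /ltn_INR /large yz; apply: neq; apply: funext => w.
  apply: propext; split => wx.
    by have := HD _ _ (HD _ _ (HB _ _ wx y1) yz) z2; rewrite !opprB !addrA !subrK.
  by have := HD _ _ (HB _ _ (HB _ _ wx z2) yz) y1; rewrite !opprB !addrA !subrK.
- rewrite /norm_dist; apply/INR_leq/small.
  by rewrite (_ : y - z = (y - x) - (z - x)); [exact: HB yx zx|rewrite opprB addrA subrK].
Qed.

End NormMetric.

Local Open Scope ring_scope.

Definition dist : F2poly -> F2poly -> R := norm_dist bnorm.

Lemma F2poly_torsion : torsion_group F2poly.
Proof.
move=> p; exists 2%N; split => //.
by rewrite -mulr_natr -polyC_natr (_ : 2%:R = 0 :> 'Z_2) ?mulr0 //; apply/eqP.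
Qed.

Lemma dist_metric : is_metric dist.
Proof. exact: norm_dist_metric bnorm0 bnorm_eq0 bnormN bnormD. Qed.

Lemma poly_size_enum (R : finNzRingType) n :
  exists s : seq {poly R}, forall p : {poly R}, (size p <= n)%N -> p \in s.
Proof.
exists [seq \poly_(i < n) f (inord i) | f : {ffun 'I_n.+1 -> R} <- enum {ffun 'I_n.+1 -> R}].
move=> p hp.
apply/mapP; exists [ffun i : 'I_n.+1 => p`_i]; rewrite ?mem_enum //.
apply/polyP => i; rewrite coef_poly; case: ltnP => hi; first by rewrite ffunE inordK // ltnS ltnW.
by rewrite nth_default // (leq_trans hp).
Qed.

Lemma dist_proper : proper_metric dist.
Proof.
apply: norm_dist_proper => M; have [s hs] := poly_size_enum 'Z_2 (tower M).
exists s => p hp; apply: hs; rewrite leqNgt; apply/negP => /ltnW /bnorm_large.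
by have := ltn_tower M.+1; lia.
Qed.

Lemma low_degree_cover k : good_cover dist 0 (INR (tower k.+1)) (INR (tower k.+1))
  (fun _ U => exists x, U = fun y => (size (y - x)%R < tower k)%N).
Proof.
apply: (@coset_good_cover _ bnorm (fun p => (size p < tower k)%N)) => [|a b ha hb|x|x hx].
- by rewrite size_poly0 tower_gt0.
- by apply: leq_ltn_trans (size_polyD _ _) _; rewrite size_polyN gtn_max ha hb.
- exact: bnorm_small.
- by rewrite ltnNge; apply/negP => /bnorm_large; lia.
Qed.

Lemma dist_lasdim0 : lasdim_le dist 0.
Proof.
exists 1%Re; split; first lra.
exists (fun r => exists k, r = INR (tower k.+1)); split; [|split].
- by move=> _ [k ->]; apply: pos_INR.
- move=> M; have [k hk] := INR_unbounded M; exists (INR (tower k.+1)); split; first by exists k.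
  by have := INR_ltn (ltn_trans (ltnSn k) (ltn_tower k.+1)); lra.
- by move=> _ [k ->]; rewrite Rmult_1_l; eexists; apply: low_degree_cover.
Qed.

Section CodeCover.
Variables (k m Q K : nat) (F : Defs.family F2poly) (r D : R).
Local Notation cube := {ffun 'I_m -> 'I_Q.+1}.

Definition covered (t : cube) := exists U, F U /\ U (code k t).

Definition same_member (s s' : cube) := exists U, [/\ F U, U (code k s) & U (code k s')].

Hypotheses (m_le : (m <= 2 ^ k)%N) (Q_le : (Q <= 2 ^ 2 ^ k)%N).
Hypotheses (r_gt : (INR (tower k) < r)%Re) (D_lt : (D < INR (tower k * K.+1)%N)%Re).
Hypotheses (F_disj : r_disjoint dist r F) (F_diam : diam_bounded dist D F).

Lemma code_members_clustered : clustered K [set t in box m Q | `[< covered t >]] same_member.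
Proof.
split.
- by move=> s; rewrite !inE => /andP [/forallP].
- move=> s s'; rewrite !inE => /andP [_ /asboolP [U [FU Us]]] /andP [_ /asboolP [U' [FU' Us']]] adj.
  exists U; split => //; have [->//|neq] := EM (U = U').
  have := Rle_trans _ _ _ (F_disj FU FU' neq Us Us') (INR_leq (bnorm_code_adjacent m_le Q_le adj)).
  lra.
- move=> a b c [U [FU Ua Ub]] [V [FV Vb Vc]]; exists U; split => //.
  have [->//|neq] := EM (U = V).
  have := F_disj FU FV neq Ub Vb; rewrite /dist /norm_dist subrr bnorm0 /=.
  have := pos_INR (tower k); lra.
- move=> s s' [U [FU Us Us']] j; rewrite -leq_subLR -ltnS -(ltn_pmul2l (tower_gt0 k)).
  apply/ltn_INR/(Rle_lt_trans _ _ _ _ D_lt)/(Rle_trans _ _ _ _ (F_diam FU Us Us')).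
  exact: INR_leq (bnorm_code_ge m_le Q_le s s' j).
Qed.

End CodeCover.

Lemma dist_asdim_infinite : asdimAN_infinite dist.
Proof.
move=> n [b [c [b_ge0 [c_ge0 covers]]]].
have [K K_gt] := INR_unbounded (2 * c + b).
pose m := (n.+1 * (K.+1 * K.+3))%N; pose k := (m + K.+2)%N.
have m_le : (m <= 2 ^ k)%N.
  have : (2 ^ m <= 2 ^ k)%N by rewrite leq_exp2l // leq_addr.
  by have := ltn_expl m (isT : (1 < 2)%N); lia.
have Q_le : (K.+2 <= 2 ^ 2 ^ k)%N.
  have := ltn_expl k (isT : (1 < 2)%N); have := ltn_expl (2 ^ k) (isT : (1 < 2)%N); lia.
have tower_ge1 : (1 <= INR (tower k))%Re := INR_leq (tower_gt0 k).
have [Fs [Fcov [Fdisj Fdiam]]] := covers (INR (tower k) + 1)%Re ltac:(lra).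
apply: (@no_clustered_cover n K (fun i => [set t in box m K.+2 | `[< covered k (Fs i) t >]])
          (fun i => same_member k (Fs i))).
  apply/subsetP => t tbox; have [i [le_in [U [FU Ut]]]] := Fcov (code k t).
  apply/bigcupP; exists (Ordinal (le_in : (i < n.+1)%N)) => //.
  by rewrite inE tbox; apply/asboolP; exists U.
move=> i le_in; apply: code_members_clustered (Fdisj i le_in) (Fdiam i le_in) => //; first lra.
rewrite mult_INR S_INR; have := pos_INR K; nra.
Qed.

Theorem mainTheorem17 :
  exists (G : zmodType) (d : G -> G -> R),
    torsion_group G /\ is_metric d /\ invariant_metric d /\ proper_metric d /\
    lasdim_le d 0 /\ asdimAN_infinite d.
Proof.
exists F2poly, dist; split; first exact: F2poly_torsion.
split; first exact: dist_metric.
split; first exact: norm_dist_invariant.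
split; first exact: dist_proper.
by split; [exact: dist_lasdim0 | exact: dist_asdim_infinite].
Qed.
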